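(* Let $C$ be an $(n,\alpha,v,\rho)$-FR code. Define $g'(\ell)$ for $\ell=1,\dots,v$ recursively by $$g'(1)=\rho,\qquad g'(\ell+1)=g'(\ell)+\rho-\left\lceil\frac{\alpha\,g'(\ell)-\ell\rho}{v-\ell}\right\rceil\quad(\ell=1,\dots,v-1).$$ Then for all $k=1,2,\dots,n$, $$M_k(C)\le\sum_{i=1}^{v}\mathbb I\big(k>n-g'(i)\big),$$ where $\mathbb I(P)$ equals $1$ if $P$ holds and $0$ otherwise.
   Context: An incidence structure is a triple $(\mathcal P,\mathcal B,\mathcal I)$ with $\mathcal P$ (points) and $\mathcal B$ (blocks) finite sets and $\mathcal I\subseteq \mathcal P\times\mathcal B$; repeated blocks are allowed. An $(n,\alpha,v,\rho)$-FR code is an incidence structure with $|\mathcal B|=n$, $|\mathcal P|=v$, every point incident with exactly $\rho$ blocks and every block incident with exactly $\alpha$ points. The supported file size is $M_k(C)=\min_{\mathcal K\subseteq\mathcal B,|\mathcal K|=k}|\{p\in\mathcal P:\exists B\in\mathcal K,(p,B)\in\mathcal I\}|$, the minimum number of distinct points incident with some block of a $k$-set of blocks. *)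

From mathcomp Require Import all_boot all_order all_algebra.
Set Implicit Arguments. Unset Strict Implicit. Unset Printing Implicit Defensive.
Import Order.TTheory GRing.Theory Num.Theory.

(* An incidence structure with v points ('I_v) and n blocks ('I_n);
   blocks are indexed, so repeated blocks are allowed. *)
Definition is_FR_code (n alpha v rho : nat) (I : 'I_v -> 'I_n -> bool) : Prop :=
  (forall p : 'I_v, #|[set B : 'I_n | I p B]| = rho) /\
  (forall B : 'I_n, #|[set p : 'I_v | I p B]| = alpha).

Definition covered (n v : nat) (I : 'I_v -> 'I_n -> bool) (K : {set 'I_n}) : {set 'I_v} :=
  [set p : 'I_v | [exists B in K, I p B]].

(* M_k(C): minimum over k-sets K of blocks of #covered points
   (the default value v is an upper bound for all terms, so harmless). *)
Definition Mk (n v : nat) (I : 'I_v -> 'I_n -> bool) (k : nat) : nat :=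
  \big[minn/v]_(K : {set 'I_n} | #|K| == k) #|covered I K|.

(* ceiling of a / b for b > 0 (floor division %/ in intdiv is Euclidean) *)
Definition ceilz (a b : int) : int := - ((- a) %/ b)%Z.

(* gp_aux m = g'(m+1) *)
Fixpoint gp_aux (alpha v rho : nat) (m : nat) : int :=
  match m with
  | 0 => (rho%:Z)
  | m'.+1 =>
      let g := gp_aux alpha v rho m' in
      (g + rho%:Z - ceilz (alpha%:Z * g - (m'.+1 * rho)%N%:Z)
                          ((v%:Z - (m'.+1)%:Z)))%R
  end.

Definition gprime (alpha v rho l : nat) : int := gp_aux alpha v rho l.-1.

From mathcomp Require Import all_boot all_order all_algebra.
From mathcomp Require Import zify lra.
Import Order.TTheory GRing.Theory Num.Theory.
Set Implicit Arguments. Unset Strict Implicit.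

(* Grow a set S of points one at a time, keeping a set T of blocks with
   #|T| = g'(#|S|) that contains every block incident with S.  Averaging the
   incidences between T and the points outside S gives a point p outside S
   lying on at least ceil((alpha g' - #|S| rho) / (v - #|S|)) blocks of T, so
   adding p and its rho blocks costs at most g'(#|S| + 1) - g'(#|S|) blocks;
   padding T restores the equality, which is possible because v rho = n alpha
   keeps g' at most n.  Any k blocks avoiding T then cover only
   points outside S, so M_k <= v - l whenever k <= n - g'(l), and the bound
   follows by taking the largest such l. *)

Lemma exists_superset_card (T : finType) (A : {set T}) k :
  #|A| <= k <= #|T| -> exists2 B : {set T}, A \subset B & #|B| = k.
Proof.
elim: k => [|k IH] /andP[]; first by rewrite leqn0 => /eqP cA _; exists A.
rewrite leq_eqVlt => /predU1P[<- _|ltAk leKT]; first by exists A.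
have [B sAB cB] := IH (introT andP (conj ltAk (ltnW leKT))).
have [x xNB] : exists x, x \in ~: B.
  by apply/set0Pn; rewrite -card_gt0 cardsCs setCK cB; lia.
exists (x |: B); first exact: subset_trans sAB (subsetUr _ _).
by rewrite cardsU1 -in_setC xNB cB.
Qed.

Lemma sum_card_incident (aT rT : finType) (R : aT -> rT -> bool) (T : {set rT}) :
  \sum_(p : aT) #|[set B in T | R p B]| = \sum_(B in T) #|[set p | R p B]|.
Proof.
transitivity (\sum_(p : aT) \sum_(B in T) (R p B : nat)).
  apply: eq_bigr => p _; rewrite -sum1_card big_mkcond [RHS]big_mkcond /=.
  by apply: eq_bigr => B _; rewrite inE; case: (B \in T); case: (R p B).
rewrite exchange_big; apply: eq_bigr => B _.
rewrite -sum1_card [RHS]big_mkcond; apply: eq_bigr => p _.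
by rewrite inE; case: (R p B).
Qed.

Lemma ceilz_le (x d c : int) : (0 < d)%R -> (ceilz x d <= c)%R = (x <= c * d)%R.
Proof. by move=> d_gt0; rewrite /ceilz lerNl lez_divRL // mulNr lerN2. Qed.

Lemma le_ceilz (x d c : int) : (0 < d)%R -> (c * d <= x)%R -> (c <= ceilz x d)%R.
Proof. by move=> d_gt0 le_cd_x; rewrite /ceilz lerNr -ltzD1 ltz_divLR //; lra. Qed.

Lemma Mk_le_card_covered n v (I : 'I_v -> 'I_n -> bool) k (K : {set 'I_n}) :
  #|K| = k -> Mk I k <= #|covered I K|.
Proof. by move=> cK; rewrite -leEnat; apply: bigmin_le_cond; rewrite cK. Qed.

Lemma Mk_le_points n v (I : 'I_v -> 'I_n -> bool) k : Mk I k <= v.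
Proof. by rewrite -leEnat; apply: bigmin_le_id. Qed.

Lemma leq_sum_indicator (P : pred nat) (M v : nat) :
  M <= v -> (forall j, 0 < j <= v -> ~~ P j -> M <= v - j) ->
  M <= \sum_(1 <= i < v.+1) P i.
Proof.
move=> le_Mv bound_M.
suff: forall j, j <= v -> M <= \sum_(1 <= i < j.+1) P i + (v - j).
  by move/(_ v (leqnn v)); rewrite subnn addn0.
elim=> [|j IH] le_jv; first by rewrite big_geq // add0n subn0.
rewrite big_nat_recr //=; case: (boolP (P j.+1)) => [_|NPj].
  by have := IH (ltnW le_jv); lia.
by have := bound_M j.+1 le_jv NPj; lia.
Qed.

Section FRCode.

Variables (n alpha v rho : nat) (I : 'I_v -> 'I_n -> bool).
Hypothesis FR : is_FR_code alpha rho I.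

Definition incident_blocks (S : {set 'I_v}) : {set 'I_n} :=
  [set B | [exists p in S, I p B]].

Lemma mem_incident_blocks (S : {set 'I_v}) p B :
  p \in S -> I p B -> B \in incident_blocks S.
Proof. by move=> pS IpB; rewrite inE; apply/existsP; exists p; rewrite pS. Qed.

Lemma card_point_blocks p : #|[set B | I p B]| = rho.
Proof. exact: FR.1. Qed.

Lemma card_block_points B : #|[set p | I p B]| = alpha.
Proof. exact: FR.2. Qed.

Lemma FR_card_incidences : v * rho = n * alpha.
Proof.
have <-: \sum_(p : 'I_v) #|[set B in [set: 'I_n] | I p B]| = v * rho.
  rewrite -[v in RHS]card_ord -sum_nat_const; apply: eq_bigr => p _.
  by rewrite -(card_point_blocks p); apply: eq_card => B; rewrite !inE.
have <-: \sum_(B in [set: 'I_n]) #|[set p | I p B]| = n * alpha.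
  rewrite -[n in RHS]card_ord -cardsT -sum_nat_const.
  by apply: eq_bigr => B _; exact: card_block_points.
exact: sum_card_incident.
Qed.

Lemma incident_blocks_setT (S : {set 'I_v}) :
  #|~: S| < alpha -> incident_blocks S = setT.
Proof.
move=> few_out; apply/eqP; rewrite eqEsubset subsetT; apply/subsetP => B _.
apply: contraT => BNS.
have: [set p | I p B] \subset ~: S.
  apply/subsetP => p; rewrite !inE => IpB; apply/negP => pS.
  by rewrite (mem_incident_blocks pS IpB) in BNS.
by move/subset_leq_card; rewrite card_block_points leqNgt few_out.
Qed.

Lemma card_incidences_outside (S : {set 'I_v}) (T : {set 'I_n}) :
  incident_blocks S \subset T ->
  \sum_(p in ~: S) #|[set B in T | I p B]| + #|S| * rho = #|T| * alpha.
Proof.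
move=> sST.
have <-: \sum_(B in T) #|[set p | I p B]| = #|T| * alpha.
  by rewrite -sum_nat_const; apply: eq_bigr => B _; exact: card_block_points.
rewrite -(sum_card_incident I T) [RHS](bigID (mem S)) /= [RHS]addnC; congr (_ + _).
  by apply: eq_bigl => p; rewrite inE.
rewrite -sum_nat_const; apply: eq_bigr => p pS.
rewrite -(card_point_blocks p); apply: eq_card => B; rewrite !inE.
by case IpB: (I p B); rewrite ?andbF // (subsetP sST _ (mem_incident_blocks pS IpB)).
Qed.

(* A point outside S of maximal degree into T is at least average. *)
Lemma exists_heavy_point (S : {set 'I_v}) (T : {set 'I_n}) :
  incident_blocks S \subset T -> #|S| < v ->
  exists2 p, p \notin S &
    #|T| * alpha <= #|[set B in T | I p B]| * #|~: S| + #|S| * rho.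
Proof.
move=> sST ltSv; have [p0 p0NS] : exists p0, p0 \in ~: S.
  by apply/set0Pn; rewrite -card_gt0 cardsCs setCK card_ord subn_gt0.
have [p pNS p_max] :=
  @arg_maxnP _ p0 (mem (~: S)) (fun p => #|[set B in T | I p B]|) p0NS.
exists p; first by rewrite -in_setC.
rewrite -(card_incidences_outside sST) leq_add2r mulnC -sum_nat_const.
exact: leq_sum.
Qed.

Definition next_gp (m : nat) (g : int) : int :=
  (g + rho%:Z - ceilz (alpha%:Z * g - (m.+1 * rho)%N%:Z) (v%:Z - m.+1%:Z))%R.

Lemma next_gp_le_blocks m (S : {set 'I_v}) (T : {set 'I_n}) :
  #|S| = m.+1 -> m.+1 < v -> incident_blocks S \subset T ->
  (next_gp m #|T| <= n%:Z)%R.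
Proof.
move=> cS lt_mv sST; rewrite /next_gp.
suff: (#|T|%:Z + rho%:Z - n%:Z <=
       ceilz (alpha%:Z * #|T|%:Z - (m.+1 * rho)%N%:Z) (v%:Z - m.+1%:Z))%R by lia.
apply: le_ceilz; first lia.
have vrho := FR_card_incidences.
have le_Tn : #|T| <= n by rewrite -[n in _ <= n]card_ord max_card.
have [le_alpha_out|lt_out_alpha] := leqP alpha (v - m.+1); first nia.
have T_full : T = setT.
  apply/eqP; rewrite eqEsubset subsetT -(incident_blocks_setT (S := S)) //.
  by rewrite cardsCs setCK card_ord cS.
by rewrite T_full cardsT card_ord; nia.
Qed.

Lemma incident_blocks_gp_step m (S : {set 'I_v}) (T : {set 'I_n}) :
  #|S| = m.+1 -> m.+1 < v -> incident_blocks S \subset T ->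
  exists (S' : {set 'I_v}) (T' : {set 'I_n}),
    [/\ #|S'| = m.+2, incident_blocks S' \subset T' & (#|T'|%:Z = next_gp m #|T|)%R].
Proof.
move=> cS lt_mv sST.
have [p pNS heavy] := exists_heavy_point sST (ltac:(by rewrite cS)).
set c := #|[set B in T | I p B]| in heavy.
pose T0 := T :|: [set B | I p B].
have cT0 : #|T0| + c = #|T| + rho.
  have -> : c = #|T :&: [set B | I p B]| by apply: eq_card => B; rewrite !inE.
  by rewrite cardsUI card_point_blocks.
have cSc : #|~: S| = v - m.+1 by rewrite cardsCs setCK card_ord cS.
have le_T0 : (#|T0|%:Z <= next_gp m #|T|)%R.
  have : (ceilz (alpha%:Z * #|T|%:Z - (m.+1 * rho)%N%:Z) (v%:Z - m.+1%:Z) <= c%:Z)%R.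
    rewrite ceilz_le; last lia.
    rewrite cS cSc in heavy; nia.
  rewrite /next_gp; set z := ceilz _ _; lia.
have : #|T0| <= `|next_gp m #|T| |%N <= #|'I_n|.
  by have := next_gp_le_blocks cS lt_mv sST; rewrite card_ord; lia.
case/exists_superset_card => T' sT0T' cT'.
exists (p |: S), T'; split; first by rewrite cardsU1 pNS cS.
  apply/subsetP => B; rewrite inE => /existsP[q /andP[]]; rewrite in_setU1.
  case/predU1P => [-> IpB | qS IqB]; apply: (subsetP sT0T'); rewrite !inE ?IpB ?orbT //.
  by rewrite (subsetP sST _ (mem_incident_blocks qS IqB)).
by rewrite cT'; lia.
Qed.

Lemma exists_incident_blocks_gp m : m < v ->
  exists (S : {set 'I_v}) (T : {set 'I_n}),
    [/\ #|S| = m.+1, incident_blocks S \subset T & (#|T|%:Z = gp_aux alpha v rho m)%R].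
Proof.
elim: m => [|m IH] lt_mv.
  pose p0 : 'I_v := Ordinal lt_mv.
  exists [set p0], [set B | I p0 B]; split; first exact: cards1.
    apply/subsetP => B; rewrite inE => /existsP[q /andP[]].
    by rewrite !inE => /eqP-> ->.
  by rewrite /= card_point_blocks.
have [S [T [cS sST cT]]] := IH (ltnW lt_mv).
have [S' [T' [cS' sST' cT']]] := incident_blocks_gp_step cS lt_mv sST.
by exists S', T'; split; rewrite // cT' cT.
Qed.

Lemma Mk_le_uncovered (S : {set 'I_v}) (T : {set 'I_n}) k :
  incident_blocks S \subset T -> #|T| + k <= n -> Mk I k <= v - #|S|.
Proof.
move=> sST le_Tk_n.
have : #|T| <= n - k <= #|'I_n| by rewrite card_ord; lia.
case/exists_superset_card => T' sTT' cT'.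
have cK : #|~: T'| = k by rewrite cardsCs setCK card_ord cT'; lia.
apply: leq_trans (Mk_le_card_covered I cK) _.
have -> : v - #|S| = #|~: S| by rewrite [RHS]cardsCs setCK card_ord.
apply: subset_leq_card; apply/subsetP => q; rewrite !inE.
case/existsP => B /andP[BK IqB]; apply/negP => qS.
by move: BK; rewrite inE (subsetP sTT' _ (subsetP sST _ (mem_incident_blocks qS IqB))).
Qed.

End FRCode.

Theorem theorem3 (n alpha v rho : nat) (I : 'I_v -> 'I_n -> bool) :
  is_FR_code alpha rho I ->
  forall k : nat, (1 <= k <= n)%N ->
  (Mk I k <= \sum_(1 <= i < v.+1)
              nat_of_bool (n%:Z - gprime alpha v rho i < k%:Z)%R)%N.
Proof.
move=> FR k _; apply: leq_sum_indicator => [|j /andP[j_gt0 le_jv]].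
  exact: Mk_le_points.
rewrite -leNgt /gprime => le_k.
have [S [T [cS sST cT]]] := exists_incident_blocks_gp FR (ltac:(lia) : j.-1 < v).
rewrite -(prednK j_gt0) -cS; apply: Mk_le_uncovered sST _; lia.
Qed.
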